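(* Suppose the jobs of an instance of $Pm||\sum w_jU_j$ are indexed so that $d_1\le d_2\le\dots\le d_n$, and consider a feasible solution in the discarding formulation: a set $S\subseteq J$ of scheduled jobs with a proper schedule $\sigma$ of $S$ in which every scheduled job $j$ satisfies $C_j(\sigma)\le d_j$, the cost being $\sum_{j\in J\setminus S}w_j$. Let $\sigma'$ be the intermediate schedule obtained from $\sigma$ by an admissible swap at some step $j^*\in S$ between machines $M_h$ and $M_i$. Then $\sigma'$ schedules the same set $S$ with every scheduled job completing by its due date; in particular $\sum w_jU_j(\sigma')\le\sum w_jU_j(\sigma)$.
   Context: Jobs $J=\{1,\dots,n\}$, job $j$ with positive integer processing time $p_j$, nonnegative integer weight $w_j$ and integer due date $d_j$; $m$ identical machines $M_1,\dots,M_m$; $p_{\max}=\max_{j\in J} p_j$, $P(X)=\sum_{j\in X}p_j$. In the discarding formulation of $Pm||\sum w_jU_j$, tardy jobs are discarded and incur penalty $w_j$: a solution schedules a subset $S$ of jobs, each completing by its due date, and $\sum w_jU_j$ equals the total weight of discarded jobs. A proper schedule $\sigma$ of $S$ is a partition $S=S_1(\sigma)\cup\dots\cup S_m(\sigma)$, the jobs of $S_i(\sigma)$ processed on $M_i$ consecutively from time $0$ without idle time in increasing index order; $C_j(\sigma)$ is the completion time of $j$. For $j\in S$ let $J_{i,j}(\sigma)=\{k\in S_i(\sigma):k\le j\}$ and $\Delta_{h,i,j}(\sigma)=P(J_{h,j}(\sigma))-P(J_{i,j}(\sigma))$. The swap: admissible for $\sigma$ at step $j^*$ with machines $M_h,M_i$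 if $j^*\in S_h(\sigma)$, $|S_i(\sigma)\setminus J_{i,j^*}(\sigma)|\ge 2p_{\max}$, and $\Delta_{h,i,j^*}(\sigma)\ge 4p_{\max}^2$. Let $J_I$ be the first (smallest-index) $2p_{\max}$ jobs of $S_i(\sigma)\setminus J_{i,j^*}(\sigma)$ and $J_H$ the last (largest-index) $2p_{\max}$ jobs of $J_{h,j^*}(\sigma)$; choose non-empty $J_{H'}\subseteq J_H$, $J_{I'}\subseteq J_I$ with $P(J_{H'})=P(J_{I'})$. The intermediate schedule $\sigma'$: on $M_h$ the time interval occupied by $J_H$ in $\sigma$ is filled by $J_H\setminus J_{H'}$ then $J_{I'}$; on $M_i$ the interval occupied by $J_I$ is filled by $J_{H'}$ then $J_I\setminus J_{I'}$ (each group in its order in $\sigma$); all other jobs keep their positions; no discarded job is scheduled. *)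

From HB Require Import structures.
From mathcomp Require Import all_boot all_order all_algebra.
Set Implicit Arguments. Unset Strict Implicit. Unset Printing Implicit Defensive.
Import Order.TTheory GRing.Theory Num.Theory.

(* Jobs are 'I_n (0-based indices, index order = the paper's index order),
   machines are 'I_m.  A schedule assigns to each machine the sequence of jobs
   it processes, consecutively from time 0 without idle time, in the order of
   the sequence. *)

Definition schedule (n m : nat) := 'I_m -> seq 'I_n.

Definition Psum n (p : 'I_n -> nat) (X : seq 'I_n) : nat := \sum_(x <- X) p x.

Definition pmax n (p : 'I_n -> nat) : nat := \max_(j < n) p j.

Definition comp_time n (p : 'I_n -> nat) (s : seq 'I_n) (j : 'I_n) : nat :=
  Psum p (take (index j s).+1 s).

Definition schedules n m (sigma : schedule n m) (S : {set 'I_n}) : Prop :=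
  forall j : 'I_n, \sum_(k < m) count_mem j (sigma k) = (j \in S : nat).

Definition proper_sched n m (sigma : schedule n m) (S : {set 'I_n}) : Prop :=
  schedules sigma S /\
  forall k : 'I_m, sorted (fun a b : 'I_n => (a < b)%N) (sigma k).

Definition on_time n m (p : 'I_n -> nat) (d : 'I_n -> int)
    (sigma : schedule n m) : Prop :=
  forall (k : 'I_m) (j : 'I_n), j \in sigma k ->
    ((comp_time p (sigma k) j)%:Z <= d j)%R.

Definition scheduled n m (sigma : schedule n m) : {set 'I_n} :=
  [set j | [exists k : 'I_m, j \in sigma k]].

Definition cost n (w : 'I_n -> nat) (S : {set 'I_n}) : nat :=
  \sum_(j in ~: S) w j.

Definition Jle n m (sigma : schedule n m) (k : 'I_m) (j : 'I_n) : seq 'I_n :=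
  [seq x <- sigma k | (nat_of_ord x <= j)%N].
Definition Jgt n m (sigma : schedule n m) (k : 'I_m) (j : 'I_n) : seq 'I_n :=
  [seq x <- sigma k | (j < nat_of_ord x)%N].

Definition Delta n m (p : 'I_n -> nat) (sigma : schedule n m)
    (h i : 'I_m) (j : 'I_n) : int :=
  ((Psum p (Jle sigma h j))%:Z - (Psum p (Jle sigma i j))%:Z)%R.

Definition admissible n m (p : 'I_n -> nat) (sigma : schedule n m)
    (jstar : 'I_n) (h i : 'I_m) : Prop :=
  [/\ jstar \in sigma h,
      (2 * pmax p <= size (Jgt sigma i jstar))%N &
      (((4 * pmax p ^ 2)%N)%:Z <= Delta p sigma h i jstar)%R].

Definition J_I n m (p : 'I_n -> nat) (sigma : schedule n m)
    (jstar : 'I_n) (i : 'I_m) : seq 'I_n :=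
  take (2 * pmax p) (Jgt sigma i jstar).
Definition J_I_after n m (p : 'I_n -> nat) (sigma : schedule n m)
    (jstar : 'I_n) (i : 'I_m) : seq 'I_n :=
  drop (2 * pmax p) (Jgt sigma i jstar).
Definition J_H n m (p : 'I_n -> nat) (sigma : schedule n m)
    (jstar : 'I_n) (h : 'I_m) : seq 'I_n :=
  drop (size (Jle sigma h jstar) - 2 * pmax p) (Jle sigma h jstar).
Definition J_H_before n m (p : 'I_n -> nat) (sigma : schedule n m)
    (jstar : 'I_n) (h : 'I_m) : seq 'I_n :=
  take (size (Jle sigma h jstar) - 2 * pmax p) (Jle sigma h jstar).

Definition swap_sched n m (p : 'I_n -> nat) (sigma : schedule n m)
    (jstar : 'I_n) (h i : 'I_m) (JH' JI' : {set 'I_n}) : schedule n m :=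
  fun k =>
    if k == h then
      J_H_before p sigma jstar h
      ++ [seq x <- J_H p sigma jstar h | x \notin JH']
      ++ [seq x <- J_I p sigma jstar i | x \in JI']
      ++ Jgt sigma h jstar
    else if k == i then
      Jle sigma i jstar
      ++ [seq x <- J_H p sigma jstar h | x \in JH']
      ++ [seq x <- J_I p sigma jstar i | x \notin JI']
      ++ J_I_after p sigma jstar i
    else sigma k.

From HB Require Import structures.
From mathcomp Require Import all_boot all_order all_algebra zify.
Import Order.TTheory GRing.Theory Num.Theory.

(* On M_h the block J_H is refilled by J_H \ J_H' followed by J_I', on M_i the
   block J_I by J_H' followed by J_I \ J_I'.  Since P(J_H') = P(J_I'), each
   refilled block occupies the same time interval as before, so every job
   outside the two blocks keeps its completion time and the jobs of
   J_H \ J_H' only move earlier.  Each block has total processing time at most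
   2 p_max^2, whereas Delta_{h,i,j*} >= 4 p_max^2; hence J_H' starts on M_i no
   later than J_H started on M_h, and the moved jobs of J_I, all of index
   above j* and thus due no earlier than d_{j*}, finish by
   P(J_{h,j*}) <= C_{j*} <= d_{j*}. *)

Set Implicit Arguments. Unset Strict Implicit. Unset Printing Implicit Defensive.

Lemma count_filterC (T : eqType) (a P : pred T) (s : seq T) :
  count a [seq x <- s | P x] + count a [seq x <- s | ~~ P x] = count a s.
Proof.
by rewrite -count_cat; apply: (permP _) a; rewrite perm_filterC.
Qed.

Section ProcessingTimes.
Variables (n : nat) (p : 'I_n -> nat).

Local Notation ltI := (fun a b : 'I_n => (a < b)%N).

Let ltI_trans : transitive ltI.
Proof. by move=> y x z; apply: ltn_trans. Qed.

Lemma Psum_cons x s : Psum p (x :: s) = p x + Psum p s.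
Proof. by rewrite /Psum big_cons. Qed.

Lemma Psum_cat s t : Psum p (s ++ t) = Psum p s + Psum p t.
Proof. by rewrite /Psum big_cat. Qed.

Lemma Psum_filterC (P : pred 'I_n) s :
  Psum p [seq x <- s | P x] + Psum p [seq x <- s | ~~ P x] = Psum p s.
Proof. by rewrite -Psum_cat /Psum; apply: perm_big; rewrite perm_filterC. Qed.

Lemma Psum_le_size s : Psum p s <= size s * pmax p.
Proof.
elim: s => [|x s IHs]; first by rewrite /Psum big_nil.
by rewrite Psum_cons mulSn leq_add // /pmax; exact: leq_bigmax.
Qed.

Lemma Psum_filter_mem (A : {set 'I_n}) s :
  uniq s -> {subset A <= s} -> Psum p [seq x <- s | x \in A] = \sum_(x in A) p x.
Proof.
move=> s_uniq sub_As; rewrite /Psum -big_enum; apply: perm_big.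
apply: uniq_perm; [exact: filter_uniq|exact: enum_uniq|] => x.
by rewrite mem_filter mem_enum; case: (boolP (x \in A)) => // /sub_As.
Qed.

Lemma comp_time_cons x s j :
  comp_time p (x :: s) j = if x == j then p x else p x + comp_time p s j.
Proof.
rewrite /comp_time /=; case: eqP => _ /=; last by rewrite Psum_cons.
by rewrite take0 Psum_cons /Psum big_nil addn0.
Qed.

Lemma comp_time_catl s t j : j \in s -> comp_time p (s ++ t) j = comp_time p s j.
Proof.
elim: s => [|x s IHs] //=; rewrite inE !comp_time_cons eq_sym.
by case: eqP => //= _ /IHs ->.
Qed.

Lemma comp_time_catr s t j :
  j \notin s -> comp_time p (s ++ t) j = Psum p s + comp_time p t j.
Proof.
elim: s => [|x s IHs]; first by rewrite /Psum big_nil.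
rewrite inE negb_or eq_sym => /andP[/negbTE xj /IHs IH].
by rewrite /= comp_time_cons xj IH Psum_cons addnA.
Qed.

Lemma comp_time_le_Psum s j : comp_time p s j <= Psum p s.
Proof.
rewrite /comp_time -[in leqRHS](cat_take_drop (index j s).+1 s).
by rewrite Psum_cat leq_addr.
Qed.

Lemma comp_time_filter (P : pred 'I_n) s j :
  P j -> comp_time p [seq x <- s | P x] j <= comp_time p s j.
Proof.
move=> Pj; elim: s => [|x s IHs] //=.
have [->|xj] := eqVneq x j; first by rewrite Pj !comp_time_cons eqxx.
case: (P x); rewrite !comp_time_cons (negbTE xj) ?leq_add2l //.
exact: leq_trans IHs (leq_addl _ _).
Qed.

Lemma sorted_filter_split s (j : 'I_n) : sorted ltI s ->
  s = [seq x <- s | (nat_of_ord x <= j)%N] ++ [seq x <- s | (j < nat_of_ord x)%N].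
Proof.
elim: s => [|x s IHs] //= s_sorted.
have /allP gt_x := order_path_min ltI_trans s_sorted.
case: leqP => [_|jx] /=; first by rewrite -IHs ?(path_sorted s_sorted).
rewrite (@eq_in_filter _ _ pred0) ?filter_pred0 => [|y /gt_x xy]; last first.
  by rewrite leqNgt (ltn_trans jx xy).
rewrite (@eq_in_filter _ _ predT) ?filter_predT // => y /gt_x.
exact: ltn_trans.
Qed.

Lemma comp_time_sorted s (j : 'I_n) : sorted ltI s -> j \in s ->
  comp_time p s j = Psum p [seq x <- s | (nat_of_ord x <= j)%N].
Proof.
elim: s => [|x s IHs] //= s_sorted.
have /allP gt_x := order_path_min ltI_trans s_sorted.
rewrite inE comp_time_cons eq_sym; have [->|jx /= js] := eqVneq j x.
  rewrite leqnn Psum_cons (@eq_in_filter _ _ pred0) ?filter_pred0.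
    by rewrite /Psum big_nil addn0.
  by move=> y /gt_x; rewrite ltnNge => /negbTE.
by rewrite (ltnW (gt_x _ js)) Psum_cons IHs ?(path_sorted s_sorted).
Qed.

End ProcessingTimes.

Section DueDates.
Variables (n : nat) (p : 'I_n -> nat) (d : 'I_n -> int).

Definition on_time_from (t : nat) (s : seq 'I_n) : Prop :=
  forall j, j \in s -> ((t + comp_time p s j)%:Z <= d j)%R.

Lemma on_timeP m (sigma : schedule n m) :
  on_time p d sigma <-> forall k, on_time_from 0 (sigma k).
Proof. by split=> ontime k j; have := ontime k j; rewrite add0n. Qed.

Lemma on_time_from_cat t s u :
  on_time_from t s -> on_time_from (t + Psum p s) u -> on_time_from t (s ++ u).
Proof.
move=> ontime_s ontime_u j; rewrite mem_cat.
have [js _|js /= ju] := boolP (j \in s).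
  by rewrite comp_time_catl // ontime_s.
by rewrite comp_time_catr // addnA ontime_u.
Qed.

Lemma on_time_from_catl t s u : on_time_from t (s ++ u) -> on_time_from t s.
Proof.
by move=> ontime j js; rewrite -(comp_time_catl p u js) ontime // mem_cat js.
Qed.

Lemma on_time_from_catr t s u :
  uniq (s ++ u) -> on_time_from t (s ++ u) -> on_time_from (t + Psum p s) u.
Proof.
rewrite cat_uniq => /and3P[_ /hasPn disj _] ontime j ju.
by rewrite -addnA -comp_time_catr ?disj // ontime // mem_cat ju orbT.
Qed.

Lemma on_time_from_le t t' s : t' <= t -> on_time_from t s -> on_time_from t' s.
Proof.
move=> le_t ontime j js; apply: le_trans (ontime j js).
by rewrite lez_nat leq_add2r.
Qed.

Lemma on_time_from_filter t (P : pred 'I_n) s :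
  on_time_from t s -> on_time_from t [seq x <- s | P x].
Proof.
move=> ontime j; rewrite mem_filter => /andP[Pj js].
by apply: le_trans (ontime j js); rewrite lez_nat leq_add2l comp_time_filter.
Qed.

Lemma on_time_from_bound t s (D : int) :
  (forall j, j \in s -> (D <= d j)%R) -> ((t + Psum p s)%:Z <= D)%R ->
  on_time_from t s.
Proof.
move=> le_D le_sum j js; apply: le_trans (le_D j js); apply: le_trans le_sum.
by rewrite lez_nat leq_add2l comp_time_le_Psum.
Qed.

End DueDates.

Lemma schedules_perm2 n m (sigma sigma' : schedule n m) (S : {set 'I_n}) h i :
  h != i -> (forall k, k != h -> k != i -> sigma' k = sigma k) ->
  perm_eq (sigma' h ++ sigma' i) (sigma h ++ sigma i) ->
  schedules sigma S -> schedules sigma' S.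
Proof.
move=> hi same_k /permP perm_hi sched j; rewrite -sched.
rewrite [LHS](bigD1 h) // [RHS](bigD1 h) // (bigD1 i) 1?eq_sym //.
rewrite [in RHS](bigD1 i) 1?eq_sym //= !addnA -!count_cat perm_hi.
by congr (_ + _); apply: eq_bigr => k /andP[kh ki]; rewrite same_k.
Qed.

Lemma scheduled_schedules n m (sigma : schedule n m) (S : {set 'I_n}) :
  schedules sigma S -> scheduled sigma = S.
Proof.
move=> sched; apply/setP => j; rewrite inE; have := sched j.
have [jS|jS] := boolP (j \in S) => /= count_j.
  case: existsP => // no_k; move: count_j; rewrite big1 // => k _.
  by apply/count_memPn/negP => jk; apply: no_k; exists k.
apply/existsP => -[k jk]; move: count_j; rewrite (bigD1 k) //= => /eqP.
by rewrite addn_eq0 => /andP[/eqP/count_memPn]; rewrite jk.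
Qed.

Section Swap.
Variables (n m : nat) (p : 'I_n -> nat) (d : 'I_n -> int).
Variables (S : {set 'I_n}) (sigma : schedule n m) (jstar : 'I_n) (h i : 'I_m).
Variables (JH' JI' : {set 'I_n}).
Hypothesis p_pos : forall j, 0 < p j.
Hypothesis d_sorted : forall j1 j2 : 'I_n, (j1 <= j2)%N -> (d j1 <= d j2)%R.
Hypothesis sigma_proper : proper_sched sigma S.
Hypothesis sigma_on_time : on_time p d sigma.
Hypothesis swap_admissible : admissible p sigma jstar h i.
Hypothesis JH'_sub : JH' \subset [set x | x \in J_H p sigma jstar h].
Hypothesis JI'_sub : JI' \subset [set x | x \in J_I p sigma jstar i].
Hypothesis JH'_JI'_Psum : \sum_(x in JH') p x = \sum_(x in JI') p x.

Local Notation pm := (pmax p).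
Local Notation Lh := (Jle sigma h jstar).
Local Notation Gh := (Jgt sigma h jstar).
Local Notation Li := (Jle sigma i jstar).
Local Notation Bh := (J_H_before p sigma jstar h).
Local Notation JH := (J_H p sigma jstar h).
Local Notation JI := (J_I p sigma jstar i).
Local Notation Ai := (J_I_after p sigma jstar i).
Local Notation Hin := [seq x <- JH | x \in JH'].
Local Notation Hout := [seq x <- JH | x \notin JH'].
Local Notation Iin := [seq x <- JI | x \in JI'].
Local Notation Iout := [seq x <- JI | x \notin JI'].
Local Notation sigma' := (swap_sched p sigma jstar h i JH' JI').

Let sigma_uniq k : uniq (sigma k).
Proof.
apply: (sorted_uniq _ _ (sigma_proper.2 k)) => [y x z|x]; first exact: ltn_trans.
exact: ltnn.
Qed.

Lemma sigma_Jle_Jgt k : sigma k = Jle sigma k jstar ++ Jgt sigma k jstar.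
Proof. exact: sorted_filter_split (sigma_proper.2 k). Qed.

Lemma sigma_h_blocks : sigma h = Bh ++ JH ++ Gh.
Proof. by rewrite catA cat_take_drop -sigma_Jle_Jgt. Qed.

Lemma sigma_i_blocks : sigma i = Li ++ JI ++ Ai.
Proof. by rewrite cat_take_drop -sigma_Jle_Jgt. Qed.

Lemma pmax_gt0 : 0 < pm.
Proof. by apply: leq_trans (p_pos jstar) _; apply: leq_bigmax. Qed.

Lemma Psum_J_H_le : Psum p JH <= 2 * pm ^ 2.
Proof. by apply: leq_trans (Psum_le_size _ _) _; rewrite size_drop; nia. Qed.

Lemma Psum_J_I_le : Psum p JI <= 2 * pm ^ 2.
Proof. by apply: leq_trans (Psum_le_size _ _) _; rewrite size_take_min; nia. Qed.

Lemma Psum_Jle_gap : Psum p Li + 4 * pm ^ 2 <= Psum p Lh.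
Proof. by case: swap_admissible => _ _; rewrite /Delta; lia. Qed.

Lemma h_neq_i : h != i.
Proof.
apply/eqP => hi; have := Psum_Jle_gap; rewrite hi.
have : 0 < pm ^ 2 by rewrite expn_gt0 pmax_gt0.
lia.
Qed.

Lemma Psum_Lh_le_due : ((Psum p Lh)%:Z <= d jstar)%R.
Proof.
case: swap_admissible => jstar_h _ _.
by rewrite /Jle -comp_time_sorted ?sigma_on_time ?(sigma_proper.2 h).
Qed.

Lemma Psum_Lh_blocks : Psum p Lh = Psum p Bh + Psum p JH.
Proof. by rewrite -Psum_cat cat_take_drop. Qed.

Lemma Psum_Hin_Iin : Psum p Hin = Psum p Iin.
Proof.
rewrite !Psum_filter_mem ?JH'_JI'_Psum ?drop_uniq ?take_uniq ?filter_uniq //.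
- by move=> x /(subsetP JI'_sub); rewrite inE.
- by move=> x /(subsetP JH'_sub); rewrite inE.
Qed.

Lemma d_J_I j : j \in JI -> (d jstar <= d j)%R.
Proof. by move/mem_take; rewrite mem_filter => /andP[/ltnW/d_sorted]. Qed.

Lemma swap_perm : perm_eq (sigma' h ++ sigma' i) (sigma h ++ sigma i).
Proof.
rewrite /swap_sched eqxx eq_sym (negbTE h_neq_i) eqxx.
rewrite sigma_h_blocks sigma_i_blocks.
apply/permP => a; rewrite !count_cat.
have cH : count a Hin + count a Hout = count a JH by apply: count_filterC.
have cI : count a Iin + count a Iout = count a JI by apply: count_filterC.
lia.
Qed.

Lemma swap_schedules : schedules sigma' S.
Proof.
apply: schedules_perm2 h_neq_i _ swap_perm sigma_proper.1 => k kh ki.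
by rewrite /swap_sched (negbTE kh) (negbTE ki).
Qed.

Lemma sigma_h_on_time :
  [/\ on_time_from p d 0 Bh, on_time_from p d (Psum p Bh) JH
    & on_time_from p d (Psum p Lh) Gh].
Proof.
have ontime_h : on_time_from p d 0 (sigma h) by move/on_timeP: sigma_on_time.
have uniq_h := sigma_uniq h.
rewrite -[Psum p Bh]add0n -[Psum p Lh]add0n; split.
- by move: ontime_h; rewrite sigma_h_blocks; apply: on_time_from_catl.
- move: ontime_h uniq_h; rewrite sigma_h_blocks => ontime_h uniq_h.
  exact: on_time_from_catl (on_time_from_catr uniq_h ontime_h).
- rewrite sigma_Jle_Jgt in ontime_h uniq_h.
  exact: on_time_from_catr uniq_h ontime_h.
Qed.

Lemma sigma_i_on_time :
  on_time_from p d 0 Li /\ on_time_from p d (Psum p Li + Psum p JI) Ai.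
Proof.
have ontime_i : on_time_from p d 0 (sigma i) by move/on_timeP: sigma_on_time.
have uniq_i := sigma_uniq i; rewrite sigma_i_blocks in ontime_i uniq_i.
split; first exact: on_time_from_catl ontime_i.
have uniq_JI_Ai : uniq (JI ++ Ai) by move: uniq_i; rewrite cat_uniq => /and3P[].
rewrite -[Psum p Li]add0n.
exact: on_time_from_catr uniq_JI_Ai (on_time_from_catr uniq_i ontime_i).
Qed.

Lemma swap_on_time_h : on_time_from p d 0 (sigma' h).
Proof.
have [ontime_Bh ontime_JH ontime_Gh] := sigma_h_on_time.
have sum_JH : Psum p Hin + Psum p Hout = Psum p JH by apply: Psum_filterC.
rewrite /swap_sched eqxx; apply: on_time_from_cat ontime_Bh _; rewrite add0n.
apply: on_time_from_cat; first exact: on_time_from_filter.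
apply: on_time_from_cat.
  apply: (on_time_from_bound (D := d jstar)) => [j|].
    by rewrite mem_filter => /andP[_ /d_J_I].
  apply: le_trans Psum_Lh_le_due; rewrite lez_nat Psum_Lh_blocks -Psum_Hin_Iin.
  lia.
have -> : Psum p Bh + Psum p Hout + Psum p Iin = Psum p Lh.
  by rewrite Psum_Lh_blocks -Psum_Hin_Iin; lia.
exact: ontime_Gh.
Qed.

Lemma swap_on_time_i : on_time_from p d 0 (sigma' i).
Proof.
have [_ ontime_JH _] := sigma_h_on_time.
have [ontime_Li ontime_Ai] := sigma_i_on_time.
have sum_JH : Psum p Hin + Psum p Hout = Psum p JH by apply: Psum_filterC.
have sum_JI : Psum p Iin + Psum p Iout = Psum p JI by apply: Psum_filterC.
have := Psum_Jle_gap; have := Psum_J_H_le; have := Psum_J_I_le.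
rewrite Psum_Lh_blocks => le_JI le_JH gap.
rewrite /swap_sched eq_sym (negbTE h_neq_i) eqxx.
apply: on_time_from_cat ontime_Li _; rewrite add0n.
apply: on_time_from_cat.
  by apply: on_time_from_le _ (on_time_from_filter ontime_JH); lia.
apply: on_time_from_cat.
  apply: (on_time_from_bound (D := d jstar)) => [j|].
    by rewrite mem_filter => /andP[_ /d_J_I].
  apply: le_trans Psum_Lh_le_due; rewrite lez_nat Psum_Lh_blocks.
  lia.
have -> : Psum p Li + Psum p Hin + Psum p Iout = Psum p Li + Psum p JI.
  by rewrite Psum_Hin_Iin; lia.
exact: ontime_Ai.
Qed.

Lemma swap_on_time : on_time p d sigma'.
Proof.
apply/on_timeP => k; have [->|kh] := eqVneq k h; first exact: swap_on_time_h.
have [->|ki] := eqVneq k i; first exact: swap_on_time_i.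
by rewrite /swap_sched (negbTE kh) (negbTE ki); move/on_timeP: sigma_on_time.
Qed.

End Swap.

Theorem lemma8 (n m : nat) (p : 'I_n -> nat) (w : 'I_n -> nat)
  (d : 'I_n -> int)
  (p_pos : forall j : 'I_n, (0 < p j)%N)
  (d_sorted : forall j1 j2 : 'I_n, (j1 <= j2)%N -> (d j1 <= d j2)%R)
  (S : {set 'I_n}) (sigma : schedule n m)
  (Hproper : proper_sched sigma S)
  (Hdue : on_time p d sigma)
  (jstar : 'I_n) (h i : 'I_m)
  (Hadm : admissible p sigma jstar h i)
  (JH' JI' : {set 'I_n})
  (HJH'sub : JH' \subset [set x | x \in J_H p sigma jstar h])
  (HJI'sub : JI' \subset [set x | x \in J_I p sigma jstar i])
  (HJH'ne : JH' != set0) (HJI'ne : JI' != set0)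
  (HPeq : \sum_(x in JH') p x = \sum_(x in JI') p x) :
  let sigma' := swap_sched p sigma jstar h i JH' JI' in
  [/\ schedules sigma' S,
      on_time p d sigma' &
      (cost w (scheduled sigma') <= cost w (scheduled sigma))%N].
Proof.
(* The swap is harmless even for empty J_H', J_I': HJH'ne, HJI'ne are unused. *)
move=> sigma'.
have sched' : schedules sigma' S.
  exact: swap_schedules p_pos Hproper Hadm HJH'sub HJI'sub HPeq.
split=> //.
  exact: swap_on_time p_pos d_sorted Hproper Hdue Hadm HJH'sub HJI'sub HPeq.
by rewrite (scheduled_schedules sched') (scheduled_schedules Hproper.1).
Qed.
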